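(* If a pattern $\mathcal P$ is the union of a set row bounded by $n$ and a set column bounded by $m$, then $\mathcal P$ is Schur bounded with $\mathfrak s(\mathcal P)\le\sqrt n+\sqrt m$. Likewise, if $A=B+C$ where $B,C$ are nonnegative matrices, $B$ row bounded by $L$ and $C$ column bounded by $M$, then $\mathfrak s(\mathcal S(A))\le L+M$.
   Context: For a matrix $S=[s_{ij}]$, the Schur multiplier acts on bounded operators $T=[t_{ij}]$ on $\ell^2$ by $T\mapsto[s_{ij}t_{ij}]$, with norm $\|S\|_m$. For a pattern $\mathcal P\subseteq\mathbb N\times\mathbb N$, $\mathcal S(\mathcal P)$ is the set of matrices supported on $\mathcal P$ with entries of modulus at most $1$; $\mathfrak s(\mathcal P)=\sup_{X\in\mathcal S(\mathcal P)}\|X\|_m$, and $\mathcal P$ is Schur bounded if every element of $\mathcal S(\mathcal P)$ is a bounded Schur multiplier. For a nonnegative matrix $A$, $\mathcal S(A)=\{S:|s_{ij}|\le a_{ij}\}$ and $\mathfrak s(\mathcal S(A))=\sup_{S\in\mathcal S(A)}\|S\|_m$. A pattern is row bounded by $n$ if each row contains at most $n$ of its elements (column bounded similarly). A nonnegative matrix is row bounded by $L$ if $\sup_i\sum_j a_{ij}^2\le L^2$ (column bounded similarly). *)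

From mathcomp Require Import all_boot all_algebra.
From mathcomp Require Import complex.
From mathcomp Require Import all_classical all_reals.
From mathcomp Require Import ereal.
Import GRing.Theory Num.Theory.

Set Implicit Arguments.
Unset Strict Implicit.
Unset Printing Implicit Defensive.

Local Open Scope ring_scope.
Local Open Scope classical_set_scope.

Section SchurDefs.
Variable R : realType.

Definition cmat := nat -> nat -> R[i].

Definition cmod (z : R[i]) : R := Num.sqrt (complex.Re z ^+ 2 + complex.Im z ^+ 2).

Definition bilin (T : cmat) (x y : nat -> R[i]) (N : nat) : R[i] :=
  \sum_(i < N) \sum_(j < N) conjc (y i) * T i j * x j.

Definition in_unit_ball (x : nat -> R[i]) (N : nat) : Prop :=
  \sum_(j < N) cmod (x j) ^+ 2 <= 1.

(* operator norm on l^2 of the operator defined by the matrix T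
   (+oo when T does not define a bounded operator); computed on the
   dense subspace of finitely supported vectors *)
Definition opnorm (T : cmat) : \bar R :=
  ereal_sup [set r | exists N x y, in_unit_ball x N /\ in_unit_ball y N /\
                                   r = (cmod (bilin T x y N))%:E].

Definition schur (S T : cmat) : cmat := fun i j => S i j * T i j.

(* Schur multiplier norm ||S||_m (+oo if S is not a bounded Schur multiplier) *)
Definition schur_norm (S : cmat) : \bar R :=
  ereal_sup [set opnorm (schur S T) | T in [set T | (opnorm T <= 1%:E)%E]].

Definition SP (P : set (nat * nat)) : set cmat :=
  [set S | (forall i j, ~ P (i, j) -> S i j = 0) /\ (forall i j, cmod (S i j) <= 1)].

Definition schur_bounded (P : set (nat * nat)) : Prop :=
  forall S, SP P S -> (schur_norm S < +oo)%E.

Definition frak_s (P : set (nat * nat)) : \bar R := ereal_sup (schur_norm @` SP P).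

Definition SA (A : nat -> nat -> R) : set cmat :=
  [set S | forall i j, cmod (S i j) <= A i j].

Definition frak_s_A (A : nat -> nat -> R) : \bar R := ereal_sup (schur_norm @` SA A).

Definition mat_row_bounded (B : nat -> nat -> R) (L : R) : Prop :=
  forall i N, \sum_(j < N) B i j ^+ 2 <= L ^+ 2.
Definition mat_col_bounded (B : nat -> nat -> R) (L : R) : Prop :=
  forall j N, \sum_(i < N) B i j ^+ 2 <= L ^+ 2.

End SchurDefs.

Definition pat_row_bounded (P : set (nat * nat)) (n : nat) : Prop :=
  forall i (s : seq nat), uniq s -> (forall j, j \in s -> P (i, j)) -> (size s <= n)%N.
Definition pat_col_bounded (P : set (nat * nat)) (n : nat) : Prop :=
  forall j (s : seq nat), uniq s -> (forall i, i \in s -> P (i, j)) -> (size s <= n)%N.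

From mathcomp Require Import all_boot all_algebra complex all_classical all_reals ereal.
From mathcomp Require Import all_order ring.
Import Order.TTheory GRing.Theory Num.Theory.

Set Implicit Arguments.
Unset Strict Implicit.
Unset Printing Implicit Defensive.
Local Open Scope ring_scope.
Local Open Scope classical_set_scope.

(* Split each entry as s_ij = b_ij + c_ij with |b_ij| <= B_ij and |c_ij| <= C_ij.
   For a contraction T and unit vectors x, y, the form <(b . T) x, y> equals
   sum_k <T (x_k e_k), Y_k> with Y_k(i) = y_i conj(b_ik), so it factors through T
   and Cauchy-Schwarz bounds it by ||x|| (sum_i |y_i|^2 sum_k B_ik^2)^(1/2) <= L.
   The column part is the row part for the transposed matrices, and a pattern
   row bounded by n has a 0/1 matrix row bounded by sqrt n. *)

Definition transpose_mx {T : Type} (A : nat -> nat -> T) : nat -> nat -> T :=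
  fun i j => A j i.

Definition pattern_mx (R : realType) (P : set (nat * nat)) : nat -> nat -> R :=
  fun i j => if `[< P (i, j) >] then 1 else 0.

Section SchurBounds.
Variable R : realType.
Implicit Types (z w : R[i]) (x y : nat -> R[i]) (S T : cmat R).

Lemma cmodE z : (cmod z)%:C%C = `|z|.
Proof. by rewrite normc_def. Qed.

Lemma cmod_ge0 z : 0 <= cmod z.
Proof. exact: sqrtr_ge0. Qed.

Lemma cmod0 : cmod (0 : R[i]) = 0.
Proof. by rewrite /cmod /= expr0n /= addr0 sqrtr0. Qed.

Lemma cmod_eq0 z : cmod z = 0 -> z = 0.
Proof. by move=> z0; apply/eqP; rewrite -normr_eq0 -cmodE z0. Qed.

Lemma cmodM z w : cmod (z * w) = cmod z * cmod w.
Proof. by apply: complexI; rewrite rmorphM /= !cmodE normrM. Qed.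

Lemma cmodD z w : cmod (z + w) <= cmod z + cmod w.
Proof. by rewrite -(@lecR R) rmorphD /= !cmodE ler_normD. Qed.

Lemma cmod_sum (I : finType) (F : I -> R[i]) :
  cmod (\sum_i F i) <= \sum_i cmod (F i).
Proof.
elim/big_ind2: _ => [|a b c d ab cd|//]; first by rewrite cmod0.
by apply: le_trans (cmodD _ _) _; apply: lerD.
Qed.

Lemma cmodJ z : cmod (conjc z) = cmod z.
Proof. by case: z => a b; rewrite /cmod /= sqrrN. Qed.

Lemma cmod_real (c : R) : cmod c%:C%C = `|c|.
Proof. by rewrite /cmod /= expr0n /= addr0 sqrtr_sqr. Qed.

Definition sqnorm x N : R := \sum_(j < N) cmod (x j) ^+ 2.

Lemma in_unit_ballE x N : in_unit_ball x N = (sqnorm x N <= 1).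
Proof. by []. Qed.

Lemma sqnorm_ge0 x N : 0 <= sqnorm x N.
Proof. by apply: sumr_ge0 => j _; rewrite exprn_ge0 ?cmod_ge0. Qed.

Lemma sqnorm_eq0 x N : sqnorm x N = 0 -> forall j : 'I_N, x j = 0.
Proof.
move=> x0 j; apply: cmod_eq0; apply/eqP; rewrite -(sqrf_eq0 (cmod _)); apply/eqP.
by apply: (psumr_eq0P _ x0) => // i _; rewrite exprn_ge0 ?cmod_ge0.
Qed.

Lemma sqnormZ x N (c : R) : sqnorm (fun j => x j * c%:C%C) N = sqnorm x N * c ^+ 2.
Proof.
rewrite /sqnorm mulr_suml; apply: eq_bigr => j _.
by rewrite cmodM cmod_real exprMn real_normK ?num_real.
Qed.

Lemma sqnorm_conj x N : sqnorm (conjc \o x) N = sqnorm x N.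
Proof. by apply: eq_bigr => j _; rewrite /= cmodJ. Qed.

Lemma in_unit_ball_normalize x N : 0 < sqnorm x N ->
  in_unit_ball (fun j => x j * (Num.sqrt (sqnorm x N))^-1%:C%C) N.
Proof.
move=> x_gt0; rewrite in_unit_ballE sqnormZ exprVn sqr_sqrtr ?sqnorm_ge0 //.
by rewrite mulfV ?gt_eqF.
Qed.

Lemma bilinZ T x y N (a b : R) :
  bilin T (fun j => x j * a%:C%C) (fun i => y i * b%:C%C) N
  = (a * b)%:C%C * bilin T x y N.
Proof.
rewrite /bilin mulr_sumr; apply: eq_bigr => i _; rewrite mulr_sumr.
apply: eq_bigr => j _; move: (x j) (y i) (T i j) => [x1 x2] [y1 y2] [t1 t2].
by apply/eqP; rewrite eq_complex /=; apply/andP; split; apply/eqP; ring.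
Qed.

Lemma bilin0l T x y N : (forall j : 'I_N, x j = 0) -> bilin T x y N = 0.
Proof.
by move=> x0; rewrite /bilin big1 // => i _; rewrite big1 // => j _; rewrite x0 mulr0.
Qed.

Lemma bilin0r T x y N : (forall i : 'I_N, y i = 0) -> bilin T x y N = 0.
Proof.
by move=> y0; rewrite /bilin big1 // => i _; rewrite big1 // => j _; rewrite y0 conjc0 !mul0r.
Qed.

Lemma bilin_transpose T x y N :
  bilin (transpose_mx T) x y N = bilin T (conjc \o y) (conjc \o x) N.
Proof.
rewrite /bilin exchange_big; apply: eq_bigr => i _; apply: eq_bigr => j _.
by rewrite /transpose_mx /= conjcK; ring.
Qed.

Lemma bilin_schurD S1 S2 T x y N :
  bilin (schur (fun i j => S1 i j + S2 i j) T) x y N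
  = bilin (schur S1 T) x y N + bilin (schur S2 T) x y N.
Proof.
rewrite /bilin -big_split; apply: eq_bigr => i _; rewrite -big_split.
by apply: eq_bigr => j _; rewrite /schur /=; ring.
Qed.

Lemma opnorm_ubound T x y N : in_unit_ball x N -> in_unit_ball y N ->
  ((cmod (bilin T x y N))%:E <= opnorm T)%E.
Proof. by move=> x1 y1; apply: ereal_sup_ubound; exists N, x, y. Qed.

Lemma opnorm_transpose T : (opnorm (transpose_mx T) <= opnorm T)%E.
Proof.
apply: ge_ereal_sup => _ [N [x [y [x1 [y1 ->]]]]].
rewrite bilin_transpose; apply: opnorm_ubound;
  by rewrite in_unit_ballE sqnorm_conj.
Qed.

Lemma bilin_le_opnorm T x y N : (opnorm T <= 1%:E)%E ->
  cmod (bilin T x y N) <= Num.sqrt (sqnorm x N) * Num.sqrt (sqnorm y N).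
Proof.
move=> T1; have [x0|x_neq0] := eqVneq (sqnorm x N) 0.
  by rewrite bilin0l ?cmod0 ?mulr_ge0 ?sqrtr_ge0 //; apply: sqnorm_eq0.
have [y0|y_neq0] := eqVneq (sqnorm y N) 0.
  by rewrite bilin0r ?cmod0 ?mulr_ge0 ?sqrtr_ge0 //; apply: sqnorm_eq0.
have x_gt0 : 0 < sqnorm x N by rewrite lt0r x_neq0 sqnorm_ge0.
have y_gt0 : 0 < sqnorm y N by rewrite lt0r y_neq0 sqnorm_ge0.
have ab_gt0 : 0 < Num.sqrt (sqnorm x N) * Num.sqrt (sqnorm y N).
  by rewrite mulr_gt0 ?sqrtr_gt0.
have := opnorm_ubound T (in_unit_ball_normalize x_gt0) (in_unit_ball_normalize y_gt0).
move=> /le_trans /(_ T1); rewrite lee_fin bilinZ cmodM -invfM cmod_real.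
by rewrite ger0_norm ?ler_pdivrMl ?mulr1 // invr_ge0 ltW.
Qed.

Lemma sum_sqrtM_le N (p q : 'I_N -> R) (a b : R) :
  (forall k, 0 <= p k) -> (forall k, 0 <= q k) -> 0 <= a -> 0 <= b ->
  \sum_k p k <= a ^+ 2 -> \sum_k q k <= b ^+ 2 ->
  \sum_k Num.sqrt (p k) * Num.sqrt (q k) <= a * b.
Proof.
move=> p0 q0 a0 b0 pa qb.
have [a_eq0|a_neq0] := eqVneq a 0.
  rewrite a_eq0 expr0n /= in pa; rewrite a_eq0 mul0r big1 // => k _.
  have p_eq0 : \sum_k p k = 0 by apply/eqP; rewrite eq_le pa sumr_ge0.
  by rewrite (psumr_eq0P (fun i _ => p0 i) p_eq0) // sqrtr0 mul0r.
have [b_eq0|b_neq0] := eqVneq b 0.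
  rewrite b_eq0 expr0n /= in qb; rewrite b_eq0 mulr0 big1 // => k _.
  have q_eq0 : \sum_k q k = 0 by apply/eqP; rewrite eq_le qb sumr_ge0.
  by rewrite (psumr_eq0P (fun i _ => q0 i) q_eq0) // sqrtr0 mulr0.
have a_gt0 : 0 < a by rewrite lt0r a_neq0.
have b_gt0 : 0 < b by rewrite lt0r b_neq0.
(* AM-GM with weights b/a and a/b, chosen so that the bound is attained *)
have amgm u v : u * v <= (b / a * u ^+ 2 + a / b * v ^+ 2) / 2.
  rewrite -subr_ge0; have -> : (b / a * u ^+ 2 + a / b * v ^+ 2) / 2 - u * v
                                = (b * u - a * v) ^+ 2 / (2 * a * b).
    by field; rewrite ?gt_eqF.
  by rewrite divr_ge0 ?sqr_ge0 ?mulr_ge0 ?ltW.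
apply: (le_trans (ler_sum _ (fun k _ => amgm _ _))).
rewrite -mulr_suml big_split /= -!mulr_sumr.
under eq_bigr do rewrite sqr_sqrtr //.
under [X in _ + _ * X]eq_bigr do rewrite sqr_sqrtr //.
apply: le_trans (_ : (b / a * a ^+ 2 + a / b * b ^+ 2) / 2 <= _).
  by rewrite ler_pM2r // lerD // ler_wpM2l // divr_ge0.
by rewrite le_eqVlt; apply/orP; left; apply/eqP; field; rewrite ?gt_eqF.
Qed.

Lemma bilin_factor_le T U N x y (X Y : 'I_N -> nat -> R[i]) (a b : R) :
  (opnorm T <= 1%:E)%E -> bilin U x y N = \sum_k bilin T (X k) (Y k) N ->
  0 <= a -> 0 <= b ->
  \sum_k sqnorm (X k) N <= a ^+ 2 -> \sum_k sqnorm (Y k) N <= b ^+ 2 ->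
  cmod (bilin U x y N) <= a * b.
Proof.
move=> T1 -> a0 b0 Xa Yb; apply: (le_trans (cmod_sum _)).
apply: le_trans (sum_sqrtM_le _ _ a0 b0 Xa Yb) => [|k|k]; last by exact: sqnorm_ge0.
- by apply: ler_sum => k _; apply: bilin_le_opnorm.
- exact: sqnorm_ge0.
Qed.

Lemma sum_ord_delta (V : zmodType) N (k : 'I_N) (F : 'I_N -> V) :
  (forall j : 'I_N, j != k :> nat -> F j = 0) -> \sum_j F j = F k.
Proof. by move=> Fk; rewrite (bigD1 k) //= big1 ?addr0 // => j; apply: Fk. Qed.

Lemma bilin_schur_row_le T N x y (b : cmat R) (B : nat -> nat -> R) L :
  (opnorm T <= 1%:E)%E -> in_unit_ball x N -> in_unit_ball y N -> 0 <= L ->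
  (forall i j, cmod (b i j) <= B i j) -> mat_row_bounded B L ->
  cmod (bilin (schur b T) x y N) <= L.
Proof.
move=> T1 x1 y1 L0 bB BL; rewrite -[L]mul1r.
pose X (k : 'I_N) j := if j == nat_of_ord k then x j else 0.
pose Y (k : 'I_N) i := y i * conjc (b i k).
have Xk k : sqnorm (X k) N = cmod (x k) ^+ 2.
  rewrite /sqnorm (@sum_ord_delta _ _ k) => [|j /negbTE jk]; first by rewrite /X eqxx.
  by rewrite /X jk cmod0 expr0n.
apply: (bilin_factor_le (X := X) (Y := Y) T1) => //.
- rewrite /bilin [RHS]exchange_big; apply: eq_bigr => i _; apply: eq_bigr => k _.
  rewrite (@sum_ord_delta _ _ k) => [|j /negbTE jk]; last by rewrite /X jk mulr0.
  by rewrite /X /Y /schur eqxx rmorphM /= conjcK !mulrA.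
- by under eq_bigr do rewrite Xk; rewrite expr1n.
rewrite /sqnorm exchange_big /=.
apply: (@le_trans _ _ (\sum_(i < N) cmod (y i) ^+ 2 * L ^+ 2)).
  apply: ler_sum => i _; under eq_bigr do rewrite cmodM cmodJ exprMn.
  rewrite -mulr_sumr ler_wpM2l ?exprn_ge0 ?cmod_ge0 //.
  apply: le_trans (BL i N); apply: ler_sum => k _.
  by rewrite lerXn2r ?nnegrE ?cmod_ge0 // (le_trans (cmod_ge0 _) (bB _ _)).
by rewrite -mulr_suml -[X in _ <= X]mul1r ler_wpM2r ?exprn_ge0.
Qed.

Lemma bilin_schur_col_le T N x y (c : cmat R) (C : nat -> nat -> R) M :
  (opnorm T <= 1%:E)%E -> in_unit_ball x N -> in_unit_ball y N -> 0 <= M ->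
  (forall i j, cmod (c i j) <= C i j) -> mat_col_bounded C M ->
  cmod (bilin (schur c T) x y N) <= M.
Proof.
move=> T1 x1 y1 M0 cC CM.
rewrite -[schur c T]/(transpose_mx (schur (transpose_mx c) (transpose_mx T))).
rewrite bilin_transpose; apply: (bilin_schur_row_le (B := transpose_mx C)) => //.
- exact: le_trans (opnorm_transpose T) T1.
- by rewrite in_unit_ballE sqnorm_conj.
- by rewrite in_unit_ballE sqnorm_conj.
- by move=> i j; apply: cC.
Qed.

Lemma cmod_split z (p q : R) : 0 <= p -> 0 <= q -> cmod z <= p + q ->
  cmod (z * (p / (p + q))%:C%C) <= p /\ cmod (z - z * (p / (p + q))%:C%C) <= q.
Proof.
move=> p0 q0 zpq; have [pq0|pq_neq0] := eqVneq (p + q) 0.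
  have -> : z = 0 by apply: cmod_eq0; apply/eqP; rewrite eq_le cmod_ge0 andbT -pq0.
  by rewrite mul0r subr0 cmod0.
have pq_ge0 : 0 <= p + q by rewrite addr_ge0.
have -> : z - z * (p / (p + q))%:C%C = z * (q / (p + q))%:C%C.
  move: z {zpq} => [u v]; apply/eqP; rewrite eq_complex /=.
  by apply/andP; split; apply/eqP; field.
rewrite !cmodM !cmod_real !ger0_norm ?divr_ge0 //.
by split; apply: le_trans (ler_wpM2r _ zpq) _; rewrite ?divr_ge0 // mulrCA mulfV ?mulr1.
Qed.

Lemma schur_norm_le S (r : R) :
  (forall T N x y, (opnorm T <= 1%:E)%E -> in_unit_ball x N -> in_unit_ball y N ->
     cmod (bilin (schur S T) x y N) <= r) ->
  (schur_norm S <= r%:E)%E.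
Proof.
move=> Sr; apply: ge_ereal_sup => _ [T T1 <-].
by apply: ge_ereal_sup => _ [N [x [y [x1 [y1 ->]]]]]; rewrite lee_fin Sr.
Qed.

Lemma schur_norm_le_row_col S (B C : nat -> nat -> R) L M :
  0 <= L -> 0 <= M -> (forall i j, 0 <= B i j) -> (forall i j, 0 <= C i j) ->
  mat_row_bounded B L -> mat_col_bounded C M ->
  (forall i j, cmod (S i j) <= B i j + C i j) ->
  (schur_norm S <= (L + M)%:E)%E.
Proof.
move=> L0 M0 B0 C0 BL CM SBC.
pose b i j := S i j * (B i j / (B i j + C i j))%:C%C.
have [bB cC] : (forall i j, cmod (b i j) <= B i j) /\
               (forall i j, cmod (S i j - b i j) <= C i j).
  by split=> i j; have [] := cmod_split (B0 i j) (C0 i j) (SBC i j).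
apply: schur_norm_le => T N x y T1 x1 y1.
have -> : S = fun i j => b i j + (S i j - b i j).
  by apply/funext => i; apply/funext => j; rewrite addrC subrK.
rewrite bilin_schurD; apply: le_trans (cmodD _ _) _.
by rewrite lerD // ?(bilin_schur_row_le _ _ _ _ bB) ?(bilin_schur_col_le _ _ _ _ cC).
Qed.

Lemma pattern_mx_ge0 P i j : 0 <= pattern_mx R P i j.
Proof. by rewrite /pattern_mx; case: ifP. Qed.

Lemma pattern_mx_row_bounded P n :
  pat_row_bounded P n -> mat_row_bounded (pattern_mx R P) (Num.sqrt n%:R).
Proof.
move=> Pn i N; rewrite sqr_sqrtr ?ler0n //.
have -> : \sum_(j < N) pattern_mx R P i j ^+ 2
          = (count (fun j => `[< P (i, j) >]) (index_iota 0 N))%:R.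
  rewrite -sum1_count natr_sum big_mkord [RHS]big_mkcond.
  by apply: eq_bigr => j _; rewrite /pattern_mx; case: ifP; rewrite ?expr1n ?expr0n.
rewrite ler_nat -size_filter; apply: (Pn i); first by rewrite filter_uniq ?iota_uniq.
by move=> j; rewrite mem_filter => /andP[/asboolP].
Qed.

Lemma pattern_mx_col_bounded P n :
  pat_col_bounded P n -> mat_col_bounded (pattern_mx R P) (Num.sqrt n%:R).
Proof. exact: (@pattern_mx_row_bounded (fun ij => P (ij.2, ij.1))). Qed.

Lemma SP_le_pattern_mxU Prow Pcol S : SP (Prow `|` Pcol) S ->
  forall i j, cmod (S i j) <= pattern_mx R Prow i j + pattern_mx R Pcol i j.
Proof.
move=> [S0 S1] i j; rewrite /pattern_mx.
case: asboolP => [_ | nR]; first by apply: le_trans (S1 i j) _; rewrite lerDl; case: ifP.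
case: asboolP => [_ | nC]; first by rewrite add0r.
by rewrite S0 ?cmod0 ?addr0 // => -[].
Qed.

Lemma schur_norm_le_pattern Prow Pcol n m S :
  pat_row_bounded Prow n -> pat_col_bounded Pcol m -> SP (Prow `|` Pcol) S ->
  (schur_norm S <= (Num.sqrt n%:R + Num.sqrt m%:R)%:E)%E.
Proof.
move=> Rn Cm /SP_le_pattern_mxU.
apply: schur_norm_le_row_col (sqrtr_ge0 _) (sqrtr_ge0 _) (pattern_mx_ge0 Prow)
  (pattern_mx_ge0 Pcol) (pattern_mx_row_bounded Rn) (pattern_mx_col_bounded Cm).
Qed.

End SchurBounds.

Theorem corollary2p6 (R : realType) :
  (forall (P Prow Pcol : set (nat * nat)) (n m : nat),
      P = Prow `|` Pcol -> pat_row_bounded Prow n -> pat_col_bounded Pcol m ->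
      schur_bounded R P /\
      (frak_s R P <= (Num.sqrt (n%:R : R) + Num.sqrt (m%:R : R))%:E)%E) /\
  (forall (A B C : nat -> nat -> R) (L M : R),
      0 <= L -> 0 <= M ->
      (forall i j, 0 <= B i j) -> (forall i j, 0 <= C i j) ->
      (forall i j, A i j = B i j + C i j) ->
      mat_row_bounded B L -> mat_col_bounded C M ->
      (frak_s_A A <= (L + M)%:E)%E).
Proof.
split=> [P Prow Pcol n m -> Rn Cm | A B C L M L0 M0 B0 C0 ABC BL CM].
  have SP_le := schur_norm_le_pattern Rn Cm.
  split=> [S /SP_le /le_lt_trans -> //|]; first exact: ltry.
  by apply: ge_ereal_sup => _ [S /SP_le ? <-].
apply: ge_ereal_sup => _ [S SA <-]; apply: schur_norm_le_row_col L0 M0 B0 C0 BL CM _.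
by move=> i j; rewrite -ABC.
Qed.
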